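(* Let $(M_t)_{t=0}^n$ be a square-integrable martingale adapted to a filtration $(\mathcal F_t)_{t=0}^n$ with $M_0=0$. Then for all $x,\beta>0$ and $\alpha\ge0$, $$P\Big(\bigcup_{t=1}^n\big\{M_t\ge x\ \text{and}\ \langle M\rangle_t+[M]_t\le\alpha M_t+\beta\big\}\Big)\le\exp\Big(-\min\Big\{\frac{x^2}{8\beta},\frac{x}{6\alpha}\Big\}\Big),$$ with the convention $x/(6\alpha)=+\infty$ when $\alpha=0$.
   Context: For $t\ge1$, $\langle M\rangle_t=\sum_{i=1}^t\mathbb E[(M_i-M_{i-1})^2\mid\mathcal F_{i-1}]$ (total conditional variance) and $[M]_t=\sum_{i=1}^t(M_i-M_{i-1})^2$ (total quadratic variation). *)

From HB Require Import structures.
From mathcomp Require Import all_boot all_order all_algebra.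
From mathcomp Require Import all_classical all_reals all_analysis.
Set Implicit Arguments. Unset Strict Implicit. Unset Printing Implicit Defensive.
Import Order.TTheory GRing.Theory Num.Theory.
Local Open Scope classical_set_scope.
Local Open Scope ring_scope.

Section Defs.
Context {d : measure_display} {T : measurableType d} {R : realType}.

Definition sub_sigma_algebra (G : set (set T)) :=
  sigma_algebra setT G /\ G `<=` measurable.

Definition filtration (n : nat) (F : nat -> set (set T)) :=
  (forall t, (t <= n)%N -> sub_sigma_algebra (F t)) /\
  (forall s t, (s <= t)%N -> (t <= n)%N -> F s `<=` F t).

Definition measurable_wrt (G : set (set T)) (X : T -> R) :=
  forall B : set R, measurable B -> G (X @^-1` B).

Definition cond_exp_version (P : probability T R) (G : set (set T))
    (X V : T -> R) :=
  [/\ measurable_wrt G V, P.-integrable setT (fun w => (V w)%:E) &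
      forall A, G A ->
        (\int[P]_(w in A) (V w)%:E = \int[P]_(w in A) (X w)%:E)%E].

Definition sq_int_martingale (P : probability T R) (n : nat)
    (F : nat -> set (set T)) (M : nat -> T -> R) :=
  [/\ forall t, (t <= n)%N -> measurable_wrt (F t) (M t),
      forall t, (t <= n)%N -> P.-integrable setT (fun w => ((M t w) ^+ 2)%:E)
    & forall t, (1 <= t <= n)%N -> forall A, F t.-1 A ->
        (\int[P]_(w in A) (M t w)%:E = \int[P]_(w in A) (M t.-1 w)%:E)%E].

Definition quad_var (M : nat -> T -> R) (t : nat) (w : T) : R :=
  \sum_(1 <= i < t.+1) (M i w - M i.-1 w) ^+ 2.

(* <M>_t = sum_{i=1}^t V_i where V_i is a version of E[(M_i-M_{i-1})^2 | F_{i-1}] *)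
Definition cond_var (V : nat -> T -> R) (t : nat) (w : T) : R :=
  \sum_(1 <= i < t.+1) V i w.

End Defs.

From Pilot Require Import Defs.
From HB Require Import structures.
From mathcomp Require Import all_boot all_order all_algebra.
From mathcomp Require Import all_classical all_reals all_analysis.
From mathcomp Require Import measurable_realfun.
From mathcomp Require Import ring lra zify.
Set Implicit Arguments. Unset Strict Implicit. Unset Printing Implicit Defensive.
Import Order.TTheory GRing.Theory Num.Theory.
Import numFieldNormedType.Exports.
Local Open Scope classical_set_scope.
Local Open Scope ring_scope.

(* Put l = x / (alpha x + beta) and
     W_t = exp (l M_t - l^2/2 * sum_(i <= t) ((M_i - M_(i-1))^2 + max(V_i, 0))).
   From exp (y - y^2/2) <= 1 + y + y^2/2, (1 + u) exp (-u) <= 1 and the two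
   conditional identities E[M_t - M_(t-1) | F_(t-1)] = 0 and
   E[(M_t - M_(t-1))^2 | F_(t-1)] = V_t, W is a supermartingale with W_0 = 1, and
   so is W stopped at the first t with M_t >= x and <M>_t + [M]_t <= alpha M_t + beta.
   Off the null set where some V_i < 0, the stopped process is at least
   exp (x^2 / (2 (alpha x + beta))) on the event, so Markov's inequality bounds its
   probability by exp (- x^2 / (2 (alpha x + beta))), and
   x^2 / (2 (alpha x + beta)) >= min (x^2 / (8 beta), x / (6 alpha)). *)

Section real_inequalities.
Context {R : realType}.
Implicit Types (y u : R).

Lemma expR_sub_halfsqr_le y : expR (y - y ^+ 2 / 2) <= 1 + y + y ^+ 2 / 2.
Proof.
(* 1 - y + y^2/2 <= exp (y^2/2 - y) and (1 - y + y^2/2) (1 + y + y^2/2) = 1 + y^4/4. *)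
set u := y - y ^+ 2 / 2.
have hNu := expR_ge1Dx (- u).
have hinv : expR u * expR (- u) = 1 by rewrite -expRD subrr expR0.
have := expR_gt0 u; have := expR_gt0 (- u).
have hpos : 0 < 1 - y + y ^+ 2 / 2 by nra.
have hprod : 1 <= (1 - y + y ^+ 2 / 2) * (1 + y + y ^+ 2 / 2) by nra.
have : 1 - y + y ^+ 2 / 2 <= expR (- u) by rewrite /u in hNu *; lra.
nra.
Qed.

Lemma expR_sub_halfsqr_le_half y : expR (y - y ^+ 2 / 2) <= expR (1 / 2).
Proof. by rewrite ler_expR; have := sqr_ge0 (y - 1); nra. Qed.

Lemma mul1D_expRN_le1 u : (1 + u) * expR (- u) <= 1.
Proof.
have := expR_ge1Dx u; have := expR_gt0 (- u).
have : expR u * expR (- u) = 1 by rewrite -expRD subrr expR0.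
nra.
Qed.

(* The one-step supermartingale inequality, for a = 1_C W_k, l = lambda,
   z = M_(k+1) - M_k and v = V_(k+1). *)
Lemma exp_increment_le (a l z v : R) : 0 <= a ->
  a * expR (l * z - (l * z) ^+ 2 / 2) * expR (- (l ^+ 2 / 2 * Num.max v 0))
  <= a + l * (z * (a * expR (- (l ^+ 2 / 2 * Num.max v 0))))
       + l ^+ 2 / 2 * ((z ^+ 2 - v) * (a * expR (- (l ^+ 2 / 2 * Num.max v 0)))).
Proof.
move=> a0; set u := l ^+ 2 / 2 * Num.max v 0; set g := a * expR (- u).
have g0 : 0 <= g by rewrite mulr_ge0 ?expR_ge0.
have l0 : 0 <= l ^+ 2 / 2 by rewrite mulr_ge0 ?sqr_ge0.
have hE : g * expR (l * z - (l * z) ^+ 2 / 2) <= g * (1 + l * z + (l * z) ^+ 2 / 2).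
  exact/ler_wpM2l/expR_sub_halfsqr_le.
have hv : l ^+ 2 / 2 * v * g <= u * g.
  by apply: ler_wpM2r => //; apply: ler_wpM2l => //; rewrite le_max lexx.
have hu : g * (1 + u) <= a.
  by have := mul1D_expRN_le1 u; rewrite /g; nra.
have -> : a * expR (l * z - (l * z) ^+ 2 / 2) * expR (- u)
          = g * expR (l * z - (l * z) ^+ 2 / 2) by rewrite /g; ring.
have : g * (1 + l * z + (l * z) ^+ 2 / 2) = g + l * (z * g)
       + l ^+ 2 / 2 * ((z ^+ 2 - v) * g) + l ^+ 2 / 2 * v * g by ring.
lra.
Qed.

Lemma exponent_ge_rate (x alpha beta l m q : R) :
  0 < x -> 0 < beta -> 0 <= alpha -> l * (alpha * x + beta) = x ->
  x <= m -> q <= alpha * m + beta ->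
  x ^+ 2 / (2 * (alpha * x + beta)) <= l * m - l ^+ 2 / 2 * q.
Proof.
move=> x0 b0 a0 hl hm hq.
have s0 : 0 < alpha * x + beta by have := mulr_ge0 a0 (ltW x0); lra.
have hl' : l = x / (alpha * x + beta).
  by rewrite -[in LHS](mulfK (negbT (gt_eqF s0)) l) hl.
have l0 : 0 <= l by rewrite hl' divr_ge0 ?ltW.
have -> : x ^+ 2 / (2 * (alpha * x + beta)) = x * l / 2.
  by rewrite hl'; field; rewrite gt_eqF.
have la : l * alpha <= 1.
  rewrite -(ler_pM2r s0) mul1r mulrAC hl; have := mulr_ge0 a0 (ltW x0); nra.
have h1 : l ^+ 2 / 2 * q <= l ^+ 2 / 2 * (alpha * m + beta).
  by rewrite ler_wpM2l // mulr_ge0 // sqr_ge0.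
have h2 : (l - l ^+ 2 * alpha / 2) * x <= (l - l ^+ 2 * alpha / 2) * m.
  by rewrite ler_wpM2l //; nra.
have h3 : l ^+ 2 * (alpha * x + beta) = l * x by rewrite expr2 -mulrA hl.
nra.
Qed.

Lemma min_rate_le (x alpha beta : R) : 0 < x -> 0 < beta -> 0 <= alpha ->
  (if alpha == 0 then x ^+ 2 / (8 * beta)
   else Num.min (x ^+ 2 / (8 * beta)) (x / (6 * alpha)))
  <= x ^+ 2 / (2 * (alpha * x + beta)).
Proof.
move=> x0 b0 a0.
have ax0 : 0 <= alpha * x by rewrite mulr_ge0 // ltW.
have le_den c : 0 < c -> 2 * (alpha * x + beta) <= c ->
    x ^+ 2 / c <= x ^+ 2 / (2 * (alpha * x + beta)).
  by move=> c0 hc; rewrite ler_wpM2l ?sqr_ge0 // lef_pV2 ?posrE //; lra.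
have [a_eq0|a_neq0] := eqVneq alpha 0.
  by apply: le_den; rewrite ?a_eq0 ?mulr_gt0 //; lra.
have ap : 0 < alpha by rewrite lt_def a_neq0.
have [hab|hab] := leP (alpha * x) beta.
  by rewrite ge_min le_den ?mulr_gt0 //; lra.
rewrite ge_min; apply/orP; right.
have -> : x / (6 * alpha) = x ^+ 2 / (6 * alpha * x).
  by field; rewrite !gt_eqF.
by apply: le_den; rewrite ?mulr_gt0 //; lra.
Qed.

Lemma le_div_natr_eq0 (a C : R) : 0 <= a ->
  (forall k, (0 < k)%N -> a <= C / k%:R) -> a = 0.
Proof.
move=> a0 hC; apply/eqP; rewrite eq_le a0 andbT leNgt; apply/negP => ap.
set k := (Num.truncn (C / a)).+1.
have kp : 0 < k%:R :> R by rewrite ltr0n.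
have : C / a < k%:R := truncnS_gt _.
rewrite ltr_pdivrMr // => hCk.
have := hC k isT; rewrite ler_pdivlMr //; lra.
Qed.

(* The number of j < N with j + 1 <= y, i.e. min N (floor y) for y >= 0. *)
Definition staircase (N : nat) y : R :=
  \sum_(j < N) (if j.+1%:R <= y then 1 else 0).

Lemma staircaseS N y :
  staircase N.+1 y = staircase N y + (if N.+1%:R <= y then 1 else 0).
Proof. by rewrite /staircase big_ord_recr. Qed.

Lemma staircase_le_nat N y : staircase N y <= N%:R.
Proof.
elim: N => [|N IH]; first by rewrite /staircase big_ord0.
by rewrite staircaseS -natr1; case: ifP => _; lra.
Qed.

Lemma staircase_le N y : 0 <= y -> staircase N y <= y.
Proof.
move=> y0; elim: N => [|N IH]; first by rewrite /staircase big_ord0.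
rewrite staircaseS; case: ifPn => [hN|_]; last by rewrite addr0.
by have := staircase_le_nat N y; rewrite -natr1 in hN; lra.
Qed.

Lemma staircase_full N y : N%:R <= y -> staircase N y = N%:R.
Proof.
elim: N => [|N IH] hN; first by rewrite /staircase big_ord0.
rewrite staircaseS IH; last by rewrite -natr1 in hN; lra.
by rewrite ifT // natr1.
Qed.

Lemma staircase_gt N y : y <= N%:R -> y - 1 < staircase N y.
Proof.
elim: N => [|N IH] hN; first by rewrite /staircase big_ord0; lra.
rewrite staircaseS; have [/IH|hyN] := leP y N%:R; first by case: ifP => _; lra.
rewrite staircase_full; last exact: ltW.
by move: hN; case: (leP N.+1%:R y); rewrite -natr1; lra.
Qed.

Lemma staircase_approx (N k : nat) y : (0 < k)%N -> 0 <= y -> k%:R * y <= N%:R ->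
  `|y - staircase N (k%:R * y) / k%:R| <= k%:R^-1.
Proof.
move=> k0 y0 hyN; have kp : 0 < k%:R :> R by rewrite ltr0n.
have h1 := staircase_le N (mulr_ge0 (ltW kp) y0).
have h2 := staircase_gt hyN.
have -> : y - staircase N (k%:R * y) / k%:R
          = (k%:R * y - staircase N (k%:R * y)) / k%:R by field; rewrite gt_eqF.
rewrite normrM normfV normr_nat ler_pdivrMr // mulVf ?gt_eqF //.
by rewrite ler_norml; apply/andP; split; lra.
Qed.

End real_inequalities.

Definition Rintegrable {d} {T : measurableType d} {R : realType}
  (mu : {measure set T -> \bar R}) (f : T -> R) :=
  mu.-integrable setT (EFin \o f).

Lemma measurable_set_ler {d} {U : measurableType d} {R : realType} (f g : U -> R) :
  measurable_fun setT f -> measurable_fun setT g -> measurable [set w | f w <= g w].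
Proof.
by move=> mf mg; have := measurable_fun_ler mf mg measurableT (Y := [set true]) I;
   rewrite setTI.
Qed.

Section indicator_bounds.
Context {T : Type} {R : realType}.
Implicit Types (A : set T) (w : T).

Lemma indic_ge0 A w : 0 <= \1_A w :> R.
Proof. by rewrite indicE; case: (_ \in _). Qed.

Lemma indic_le1 A w : \1_A w <= 1 :> R.
Proof. by rewrite indicE; case: (_ \in _). Qed.

Lemma normr_indic_le1 A w : `|\1_A w| <= 1 :> R.
Proof. by rewrite ger0_norm ?indic_ge0 ?indic_le1. Qed.

End indicator_bounds.

Section finite_measure_integration.
Context {d : measure_display} {T : measurableType d} {R : realType}.
Variable mu : {finite_measure set T -> \bar R}.
Implicit Types (f g : T -> R) (A : set T).

Lemma bounded_normr f (B : R) : (forall w, `|f w| <= B) ->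
  [bounded f w | w in setT].
Proof.
move=> hB; rewrite /bounded_near; near=> M => w _ /=.
apply: le_trans (hB w) _; near: M; apply: nbhs_pinfty_ge; exact: num_real.
Unshelve. all: end_near. Qed.

Lemma Rintegrable_bounded f (B : R) : measurable_fun setT f ->
  (forall w, `|f w| <= B) -> Rintegrable mu f.
Proof.
move=> mf hB; apply: measurable_bounded_integrable => //.
  exact: fin_num_fun_lty (fin_num_measure mu).
exact: bounded_normr hB.
Qed.

Lemma Rintegrable_indic A : measurable A -> Rintegrable mu \1_A.
Proof.
move=> mA; apply: (Rintegrable_bounded (B := 1)); first exact: measurable_indic.
exact: normr_indic_le1.
Qed.

Lemma RintegrableD f g : Rintegrable mu f -> Rintegrable mu g ->
  Rintegrable mu (fun w => f w + g w).
Proof.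
move=> i1 i2; apply: (eq_integrable measurableT _ _ _ (integrableD measurableT i1 i2)) => w _.
by rewrite /= EFinD.
Qed.

Lemma RintegrableB f g : Rintegrable mu f -> Rintegrable mu g ->
  Rintegrable mu (fun w => f w - g w).
Proof.
move=> i1 i2; apply: (eq_integrable measurableT _ _ _ (integrableB measurableT i1 i2)) => w _.
by rewrite /= EFinB.
Qed.

Lemma RintegrableZl (c : R) f : Rintegrable mu f ->
  Rintegrable mu (fun w => c * f w).
Proof.
move=> i; apply: (eq_integrable measurableT _ _ _ (integrableZl measurableT c i)) => w _.
by rewrite /= EFinM.
Qed.

Lemma Rintegrable_normr f : Rintegrable mu f -> Rintegrable mu (fun w => `|f w|).
Proof. by move=> i; apply: (eq_integrable measurableT _ _ _ (integrable_abse i)). Qed.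

Lemma Rintegrable_mulr_bounded f g (B : R) : Rintegrable mu f ->
  measurable_fun setT g -> (forall w, `|g w| <= B) ->
  Rintegrable mu (fun w => f w * g w).
Proof.
move=> i mg hB.
apply: (eq_integrable measurableT _ _ _
  (integrableMl measurableT i mg (bounded_normr hB))) => w _.
by rewrite /= EFinM.
Qed.

Lemma Rintegrable_le f g : measurable_fun setT f ->
  (forall w, `|f w| <= `|g w|) -> Rintegrable mu g -> Rintegrable mu f.
Proof.
move=> mf h; apply: le_integrable => //; first exact/measurable_EFinP.
by move=> w _; rewrite /= lee_fin.
Qed.

Lemma Rintegrable_sum (N : nat) (h : nat -> T -> R) :
  (forall j, Rintegrable mu (h j)) ->
  Rintegrable mu (fun w => \sum_(j < N) h j w).
Proof.
move=> ih; apply: (eq_integrable measurableT _ _ _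
  (integrable_sum measurableT (index_iota 0 N) (P := xpredT) (fun j _ => ih j))).
by move=> w _; rewrite /= sumEFin big_mkord.
Qed.

Lemma Rintegral_sum (N : nat) (h : nat -> T -> R) :
  (forall j, Rintegrable mu (h j)) ->
  \int[mu]_w (\sum_(j < N) h j w) = \sum_(j < N) \int[mu]_w h j w.
Proof.
move=> ih; elim: N => [|N IH].
  by under eq_Rintegral do rewrite big_ord0; rewrite big_ord0 Rintegral_cst// mul0r.
under eq_Rintegral do rewrite big_ord_recr /=.
rewrite RintegralD //; [|exact: Rintegrable_sum|exact: ih].
by rewrite big_ord_recr /= -IH.
Qed.

Lemma Rintegral_mulr_indic f A :
  \int[mu]_w (f w * \1_A w) = fine (\int[mu]_(w in A) (f w)%:E)%E.
Proof.
rewrite -[RHS]/(\int[mu]_(w in A) f w) [RHS]Rintegral_mkcond.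
apply: eq_Rintegral => w _; rewrite patchE indicE.
by case: (w \in A); rewrite ?mulr1 ?mulr0.
Qed.

Lemma Rintegral_markov f (c : R) : 0 < c -> measurable_fun setT f ->
  Rintegrable mu f -> (forall w, 0 <= f w) ->
  (mu [set w | (c <= f w)%R] <= (c^-1 * \int[mu]_w f w)%:E)%E.
Proof.
move=> c0 mf iF f0; set S := [set w | c <= f w].
have mS : measurable S := measurable_set_ler (measurable_cst c) mf.
have -> : mu S = (\int[mu]_w \1_S w)%:E.
  by rewrite /Rintegral integral_indic // setIT fineK // fin_num_measure.
rewrite lee_fin -RintegralZl //; apply: le_Rintegral => //.
- exact: Rintegrable_indic.
- exact: RintegrableZl.
move=> w _; rewrite indicE; case: (boolP (w \in S)) => [/set_mem hw|_].
  by rewrite -(ler_pM2l c0) mulrA divff ?gt_eqF // mul1r mulr1.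
by rewrite mulr_ge0 ?invr_ge0 ?f0 ?ltW.
Qed.

End finite_measure_integration.

Section sub_sigma_algebra.
Context {d : measure_display} {T : measurableType d} {R : realType}.
Implicit Types (H : set (set T)) (f : T -> R).

(* Measurability with respect to the sub-sigma-algebra H, stated on the type
   g_sigma_algebraType H so that the library's measurable_fun lemmas apply. *)
Definition measurable_in H f :=
  measurable_fun (setT : set (g_sigma_algebraType H)) f.

Lemma g_sigma_measurableE H : sigma_algebra setT H ->
  @measurable _ (g_sigma_algebraType H) = H.
Proof. by move=> sH; rewrite /measurable /= sigma_algebra_id. Qed.

Lemma measurable_wrt_in H f : measurable_wrt H f -> measurable_in H f.
Proof. by move=> mf _ B mB; rewrite setTI; apply: sub_sigma_algebra; exact: mf. Qed.

Lemma measurable_in_wrt H f : sigma_algebra setT H ->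
  measurable_in H f -> measurable_wrt H f.
Proof.
by move=> sH mf B mB; have := mf measurableT B mB; rewrite setTI g_sigma_measurableE.
Qed.

Lemma measurable_in_fun H f : Defs.sub_sigma_algebra H ->
  measurable_in H f -> measurable_fun setT f.
Proof.
move=> [sH Hm] mf _ B mB; rewrite setTI; apply: Hm; exact: measurable_in_wrt.
Qed.

Lemma measurable_in_sub H1 H2 f : sigma_algebra setT H1 -> H1 `<=` H2 ->
  measurable_in H1 f -> measurable_in H2 f.
Proof.
by move=> sH1 H12 mf; apply: measurable_wrt_in => B mB; exact/H12/(measurable_in_wrt sH1 mf).
Qed.

Lemma measurable_in_ge H f c : sigma_algebra setT H ->
  measurable_in H f -> H [set w | c <= f w].
Proof.
move=> sH mf; have := measurable_in_wrt sH mf (measurable_itv `[c, +oo[).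
by rewrite preimage_itvcy.
Qed.

Lemma measurable_in_le H f c : sigma_algebra setT H ->
  measurable_in H f -> H [set w | f w <= c].
Proof.
move=> sH mf; have := measurable_in_wrt sH mf (measurable_itv `]-oo, c]).
by rewrite preimage_itvNyc.
Qed.

Lemma measurable_in_lt H f c : sigma_algebra setT H ->
  measurable_in H f -> H [set w | f w < c].
Proof.
move=> sH mf; have := measurable_in_wrt sH mf (measurable_itv `]-oo, c[).
by rewrite preimage_itvNyo.
Qed.

End sub_sigma_algebra.

Lemma measurable_fun_sum_nat {d} {U : measurableType d} {R : realType}
    (f : nat -> U -> R) (a b : nat) :
  (forall i, (a <= i < b)%N -> measurable_fun setT (f i)) ->
  measurable_fun setT (fun w => \sum_(a <= i < b) f i w).
Proof.
elim: b => [|b IH] hf.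
  by under eq_fun do rewrite big_geq //; exact: measurable_cst.
have [ab|ba] := leqP a b; last first.
  by under eq_fun do rewrite big_geq //; exact: measurable_cst.
under eq_fun do rewrite big_nat_recr //=.
apply: measurable_funD; last by apply: hf; lia.
by apply: IH => i /andP[ai ib]; apply: hf; lia.
Qed.

Lemma mulr_staircase_indic {T} {R : realType} (Z G : T -> R) (k N : nat) w :
  Z w * staircase N (k%:R * G w)
  = \sum_(j < N) Z w * \1_[set w | j.+1%:R <= k%:R * G w] w.
Proof.
rewrite /staircase mulr_sumr; apply: eq_bigr => j _.
rewrite indicE; case: ifP => h; first by rewrite mem_set.
by rewrite memNset //= h.
Qed.

Section conditional_expectation.
Context {d : measure_display} {T : measurableType d} {R : realType}.
Variables (mu : {finite_measure set T -> \bar R}) (H : set (set T)).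
Hypothesis subH : Defs.sub_sigma_algebra H.
Implicit Types (X Y Z G V : T -> R).

Let sH : sigma_algebra setT H := subH.1.
Let Hm : H `<=` measurable := subH.2.

Lemma Rintegrable_mulr_indic Z A : Rintegrable mu Z -> measurable A ->
  Rintegrable mu (fun w => Z w * \1_A w).
Proof.
move=> iZ mA; apply: (Rintegrable_mulr_bounded (B := 1)) => //.
exact: normr_indic_le1.
Qed.

Lemma measurable_in_staircase_level G (k j : nat) : measurable_in H G ->
  H [set w | j.+1%:R <= k%:R * G w].
Proof. by move=> mG; exact/(measurable_in_ge _ sH)/measurable_funM. Qed.

Lemma Rintegrable_mulr_staircase Z G (k N : nat) : Rintegrable mu Z ->
  measurable_in H G -> Rintegrable mu (fun w => Z w * staircase N (k%:R * G w)).
Proof.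
move=> iZ mG; apply: (eq_integrable measurableT _ _ _ (Rintegrable_sum N
  (fun j => Rintegrable_mulr_indic iZ (Hm (measurable_in_staircase_level k j mG))))).
by move=> w _; rewrite /= mulr_staircase_indic.
Qed.

Lemma Rintegral_mulr_staircase_eq0 Z G (k N : nat) : Rintegrable mu Z ->
  (forall A, H A -> \int[mu]_(w in A) (Z w)%:E = 0)%E -> measurable_in H G ->
  \int[mu]_w (Z w * staircase N (k%:R * G w)) = 0.
Proof.
move=> iZ hZ mG; have HA j := measurable_in_staircase_level k j mG.
under eq_Rintegral do rewrite mulr_staircase_indic.
rewrite (@Rintegral_sum _ _ _ mu N (fun j w => Z w * \1_[set w | j.+1%:R <= k%:R * G w] w));
  last by move=> j; exact/Rintegrable_mulr_indic/Hm.
by apply: big1 => j _; rewrite Rintegral_mulr_indic (hZ _ (HA j)).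
Qed.

(* G lies within 1/k of the step function staircase N (k G) / k, whose integral
   against Z is a sum of integrals of Z over sets of H. *)
Lemma normr_Rintegral_mulr_le Z G (B : R) (k : nat) : (0 < k)%N ->
  Rintegrable mu Z ->
  (forall A, H A -> \int[mu]_(w in A) (Z w)%:E = 0)%E -> measurable_in H G ->
  (forall w, 0 <= G w <= B) ->
  `|\int[mu]_w (Z w * G w)| <= \int[mu]_w `|Z w| / k%:R.
Proof.
move=> k0 iZ hZ mG hGB; set N := (k * (Num.truncn B).+1)%N.
have kp : 0 < k%:R :> R by rewrite ltr0n.
pose Gk w := staircase N (k%:R * G w) / k%:R.
have iZG : Rintegrable mu (fun w => Z w * G w).
  apply: (Rintegrable_mulr_bounded (B := B)) iZ (measurable_in_fun subH mG) _ => w.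
  by have := hGB w; rewrite ler_norml; lra.
have iZGk : Rintegrable mu (fun w => Z w * Gk w).
  apply: (eq_integrable measurableT _ _ _
    (RintegrableZl k%:R^-1 (Rintegrable_mulr_staircase k N iZ mG))).
  by move=> w _ /=; rewrite /Gk mulrC mulrA.
have ZGk0 : \int[mu]_w (Z w * Gk w) = 0.
  under eq_Rintegral do rewrite /Gk mulrA mulrC.
  by rewrite RintegralZl ?Rintegral_mulr_staircase_eq0 ?mulr0 //;
     exact: Rintegrable_mulr_staircase.
have hGk w : `|G w - Gk w| <= k%:R^-1.
  have /andP[G0 GB] := hGB w; apply: staircase_approx => //.
  rewrite /N natrM ler_wpM2l ?ler0n //; apply: le_trans GB _.
  exact/ltW/truncnS_gt.
rewrite -[X in `|X|]subr0 -ZGk0 -RintegralB //.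
apply: le_trans (le_normr_Rintegral measurableT (RintegrableB iZG iZGk)) _.
have iaZ := Rintegrable_normr iZ.
rewrite -RintegralZr //; apply: le_Rintegral => //.
- exact/Rintegrable_normr/RintegrableB.
- by rewrite /Rintegrable; under eq_fun do rewrite mulrC; exact: RintegrableZl.
by move=> w _; rewrite -mulrBr normrM ler_wpM2l.
Qed.

Lemma Rintegral_mulr_eq0 Z G (B : R) : Rintegrable mu Z ->
  (forall A, H A -> \int[mu]_(w in A) (Z w)%:E = 0)%E -> measurable_in H G ->
  (forall w, 0 <= G w <= B) -> \int[mu]_w (Z w * G w) = 0.
Proof.
move=> iZ hZ mG hGB; apply/normr0_eq0/(le_div_natr_eq0 (C := \int[mu]_w `|Z w|)).
  exact: normr_ge0.
by move=> k k0; exact: normr_Rintegral_mulr_le.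
Qed.

Lemma Rintegral_mulr_subr_eq0 X Y G (B : R) : Rintegrable mu X -> Rintegrable mu Y ->
  (forall A, H A -> \int[mu]_(w in A) (X w)%:E = \int[mu]_(w in A) (Y w)%:E)%E ->
  measurable_in H G -> (forall w, 0 <= G w <= B) ->
  \int[mu]_w ((X w - Y w) * G w) = 0.
Proof.
move=> iX iY hXY mG hGB; apply: Rintegral_mulr_eq0 mG hGB; first exact: RintegrableB.
move=> A HA; have mA := Hm HA.
rewrite (integralB_EFin mA) ?(hXY _ HA) ?subee //.
- exact: integrable_fin_num (integrableS measurableT mA (@subsetT _ A) iY).
- exact: integrableS measurableT mA (@subsetT _ A) iX.
- exact: integrableS measurableT mA (@subsetT _ A) iY.
Qed.

Lemma measure_le_lt0_eq0 V (e : R) : measurable_in H V -> Rintegrable mu V ->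
  (forall A, H A -> 0 <= \int[mu]_(w in A) (V w)%:E)%E -> 0 < e ->
  mu [set w | V w <= - e] = 0%E.
Proof.
move=> mV iV hV e0; set A := [set w | V w <= - e].
have HA : H A := measurable_in_le _ sH mV.
have mA := Hm HA.
have hle : \int[mu]_w (V w * \1_A w) <= \int[mu]_w (- e * \1_A w).
  apply: le_Rintegral => //.
  - exact: Rintegrable_mulr_indic.
  - exact/RintegrableZl/Rintegrable_indic.
  move=> w _; rewrite indicE; case: (boolP (w \in A)) => [/set_mem|_].
    by rewrite !mulr1.
  by rewrite !mulr0.
have hmA : \int[mu]_w (- e * \1_A w) = - e * fine (mu A).
  rewrite RintegralZl //; last exact: Rintegrable_indic.
  by rewrite /Rintegral integral_indic // setIT.
have hge : 0 <= \int[mu]_w (V w * \1_A w).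
  by rewrite Rintegral_mulr_indic; apply: fine_ge0; exact: hV.
have : 0 <= fine (mu A) by apply/fine_ge0/measure_ge0.
by rewrite -[mu A]fineK ?fin_num_measure // => mA0; congr _%:E; nra.
Qed.

Lemma measure_lt0_eq0 V : measurable_in H V -> Rintegrable mu V ->
  (forall A, H A -> 0 <= \int[mu]_(w in A) (V w)%:E)%E ->
  mu [set w | V w < 0] = 0%E.
Proof.
move=> mV iV hV.
have -> : [set w | V w < 0] = \bigcup_m [set w | V w <= - m.+1%:R^-1].
  apply/seteqP; split => w /=.
    move=> hw; exists (Num.truncn (- V w)^-1) => //=.
    have hp : 0 < - V w by rewrite oppr_gt0.
    have := truncnS_gt (- V w)^-1; rewrite invf_plt ?posrE ?ltr0n // => h.
    by rewrite lerNr; apply: ltW.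
  by case=> m _ /= h; apply: le_lt_trans h _; rewrite oppr_lt0 invr_gt0 ltr0n.
have mlevel m : measurable [set w | V w <= - m.+1%:R^-1].
  exact/Hm/(measurable_in_le _ sH mV).
apply/negligibleP; first exact: bigcupT_measurable.
apply: negligible_bigcup => m; apply/negligibleP => //.
by apply: measure_le_lt0_eq0; rewrite ?invr_gt0 ?ltr0n.
Qed.

End conditional_expectation.

Section exponential_supermartingale.
Context {d : measure_display} {T : measurableType d} {R : realType}.
Variables (P : probability T R) (n : nat) (F : nat -> set (set T)).
Variables (M V : nat -> T -> R) (x alpha beta : R).
Hypothesis hF : filtration n F.
Hypothesis hM : sq_int_martingale P n F M.
Hypothesis hM0 : forall w, M 0%N w = 0.
Hypothesis hV : forall i, (1 <= i <= n)%N ->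
  cond_exp_version P (F i.-1) (fun w => (M i w - M i.-1 w) ^+ 2) (V i).
Hypotheses (x_gt0 : 0 < x) (beta_gt0 : 0 < beta) (alpha_ge0 : 0 <= alpha).

Definition lam := x / (alpha * x + beta).
Definition rate := x ^+ 2 / (2 * (alpha * x + beta)).
(* V is nonnegative only almost surely (measure_lt0_eq0), hence its positive part. *)
Definition Vpos i w := Num.max (V i w) 0.
Definition incr i w := M i w - M i.-1 w.
Definition bracket t w := \sum_(1 <= i < t.+1) (incr i w ^+ 2 + Vpos i w).
Definition expW t w := expR (lam * M t w - lam ^+ 2 / 2 * bracket t w).

Lemma Vpos_ge0 i w : 0 <= Vpos i w.
Proof. by rewrite /Vpos le_max lexx orbT. Qed.

Lemma bracketS k w :
  bracket k.+1 w = bracket k w + (incr k.+1 w ^+ 2 + Vpos k.+1 w).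
Proof. by rewrite /bracket big_nat_recr. Qed.

Lemma expW0 w : expW 0 w = 1.
Proof. by rewrite /expW /bracket big_geq // hM0 !mulr0 subr0 expR0. Qed.

Lemma expWS k w : expW k.+1 w =
  expW k w * expR (lam * incr k.+1 w - (lam * incr k.+1 w) ^+ 2 / 2)
  * expR (- (lam ^+ 2 / 2 * Vpos k.+1 w)).
Proof. by rewrite /expW bracketS -!expRD; congr expR; rewrite /incr /=; ring. Qed.

Lemma expW_ge0 k w : 0 <= expW k w.
Proof. exact: expR_ge0. Qed.

Lemma expR_Vpos_le1 i w : expR (- (lam ^+ 2 / 2 * Vpos i w)) <= 1.
Proof. by rewrite -expR0 ler_expR oppr_le0 mulr_ge0 ?Vpos_ge0 ?divr_ge0 ?sqr_ge0. Qed.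

Lemma expW_le k w : expW k w <= expR (k%:R / 2).
Proof.
elim: k => [|k IH]; first by rewrite expW0 mul0r expR0.
have hV1 := expR_Vpos_le1 k.+1 w.
have hk : expR (k.+1%:R / 2 : R) = expR (k%:R / 2) * expR (1 / 2).
  by rewrite -expRD -mulrDl natr1.
rewrite expWS hk -[X in _ <= X]mulr1; apply: (ler_pM _ _ _ hV1).
- by rewrite mulr_ge0 ?expW_ge0 ?expR_ge0.
- exact: expR_ge0.
exact: ler_pM (expW_ge0 _ _) (expR_ge0 _) IH (expR_sub_halfsqr_le_half _).
Qed.

Let F_sub k : (k <= n)%N -> Defs.sub_sigma_algebra (F k).
Proof. by move=> kn; exact: hF.1. Qed.

Let F_sigma k : (k <= n)%N -> sigma_algebra setT (F k).
Proof. by move=> kn; exact: (F_sub kn).1. Qed.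

Let F_meas k : (k <= n)%N -> F k `<=` measurable.
Proof. by move=> kn; exact: (F_sub kn).2. Qed.

Let M_adapted t : (t <= n)%N -> measurable_wrt (F t) (M t).
Proof. by case: hM => h _ _; exact: h. Qed.

Let M_sqr_integrable t : (t <= n)%N -> Rintegrable P (fun w => M t w ^+ 2).
Proof. by case: hM => _ h _; exact: h. Qed.

Let M_martingale t : (1 <= t <= n)%N -> forall A, F t.-1 A ->
  (\int[P]_(w in A) (M t w)%:E = \int[P]_(w in A) (M t.-1 w)%:E)%E.
Proof. by case: hM => _ _ h; exact: h. Qed.

Let measurable_in_F t k (f : T -> R) : (t <= k <= n)%N ->
  measurable_in (F t) f -> measurable_in (F k) f.
Proof.
move=> /andP[tk kn]; apply: measurable_in_sub; first exact/F_sigma/(leq_trans tk).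
exact: hF.2.
Qed.

Lemma measurable_in_M t k : (t <= k <= n)%N -> measurable_in (F k) (M t).
Proof.
move=> htk; apply: (measurable_in_F htk); apply: measurable_wrt_in.
by apply: M_adapted; case/andP: htk => tk kn; exact: leq_trans tk kn.
Qed.

Lemma measurable_in_V i k : (1 <= i <= n)%N -> (i.-1 <= k <= n)%N ->
  measurable_in (F k) (V i).
Proof.
by move=> hi hik; apply: (measurable_in_F hik); apply: measurable_wrt_in; case: (hV hi).
Qed.

Lemma measurable_in_Vpos i k : (1 <= i <= n)%N -> (i.-1 <= k <= n)%N ->
  measurable_in (F k) (Vpos i).
Proof. by move=> hi hik; exact: measurable_maxr (measurable_in_V hi hik) (measurable_cst _). Qed.

Lemma measurable_in_incr i k : (i <= k <= n)%N -> measurable_in (F k) (incr i).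
Proof. by move=> hik; apply: measurable_funB; apply: measurable_in_M; lia. Qed.

Lemma measurable_in_bracket t k : (t <= k <= n)%N -> measurable_in (F k) (bracket t).
Proof.
move=> htk; apply: measurable_fun_sum_nat => i hi; apply: measurable_funD.
  by apply: measurable_funX; apply: measurable_in_incr; lia.
by apply: measurable_in_Vpos; lia.
Qed.

Lemma measurable_in_expW t k : (t <= k <= n)%N -> measurable_in (F k) (expW t).
Proof.
move=> htk; apply: measurableT_comp; first exact: measurable_expR.
apply: measurable_funB; apply: measurable_funM (measurable_cst _) _.
  exact: measurable_in_M.
exact: measurable_in_bracket.
Qed.

Lemma measurable_M t : (t <= n)%N -> measurable_fun setT (M t).
Proof. by move=> tn; apply: (measurable_in_fun (F_sub tn)); apply: measurable_in_M; lia. Qed.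

Lemma Rintegrable_M t : (t <= n)%N -> Rintegrable P (M t).
Proof.
move=> tn; apply: (Rintegrable_le (g := fun w => 1 + M t w ^+ 2)).
- exact: measurable_M.
- move=> w; rewrite [X in _ <= X]ger0_norm ?addr_ge0 ?sqr_ge0 //.
  by rewrite ler_norml; apply/andP; split; nra.
- by apply: RintegrableD; [exact: finite_measure_integrable_cst | exact: M_sqr_integrable].
Qed.

Lemma Rintegrable_incr_sqr i : (1 <= i <= n)%N -> Rintegrable P (fun w => incr i w ^+ 2).
Proof.
move=> hi; apply: (Rintegrable_le (g := fun w => 2 * M i w ^+ 2 + 2 * M i.-1 w ^+ 2)).
- by apply/measurable_funX/measurable_funB; apply: measurable_M; lia.
- move=> w; rewrite /incr ger0_norm ?sqr_ge0 // ger0_norm; last first.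
    by rewrite addr_ge0 // mulr_ge0 // sqr_ge0.
  by have := sqr_ge0 (M i w + M i.-1 w); nra.
- by apply: RintegrableD; apply: RintegrableZl; apply: M_sqr_integrable; lia.
Qed.

Lemma Rintegrable_V i : (1 <= i <= n)%N -> Rintegrable P (V i).
Proof. by move=> hi; case: (hV hi). Qed.

Lemma indic_expW_bound (C : set T) k w :
  0 <= \1_C w * expW k w <= expR (k%:R / 2).
Proof.
rewrite mulr_ge0 ?indic_ge0 ?expW_ge0 //= -[X in _ <= X]mul1r.
exact: ler_pM (indic_ge0 _ _) (expW_ge0 _ _) (indic_le1 _ _) (expW_le _ _).
Qed.

Lemma Rintegrable_indic_expW k (C : set T) : (k <= n)%N -> measurable C ->
  Rintegrable P (fun w => \1_C w * expW k w).
Proof.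
move=> kn mC; apply: (Rintegrable_bounded P (B := expR (k%:R / 2))).
  apply: measurable_funM; first exact: measurable_indic.
  by apply: (measurable_in_fun (F_sub kn)); apply: measurable_in_expW; lia.
by move=> w; have /andP[CW0 CW1] := indic_expW_bound C k w; rewrite ger0_norm.
Qed.

Definition weight k (C : set T) w :=
  \1_C w * expW k w * expR (- (lam ^+ 2 / 2 * Vpos k.+1 w)).

Lemma weight_bound k C w : 0 <= weight k C w <= expR (k%:R / 2).
Proof.
have /andP[CW0 CW1] := indic_expW_bound C k w.
rewrite /weight mulr_ge0 ?expR_ge0 //= -[X in _ <= X]mulr1.
exact: ler_pM CW0 (expR_ge0 _) CW1 (expR_Vpos_le1 _ _).
Qed.

Lemma measurable_in_weight k C : (k < n)%N -> F k C ->
  measurable_in (F k) (weight k C).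
Proof.
move=> kn FC; apply: measurable_funM; first apply: measurable_funM.
- by apply: measurable_indic; rewrite g_sigma_measurableE //; exact/F_sigma/ltnW.
- by apply: measurable_in_expW; lia.
apply: measurableT_comp; first exact: measurable_expR.
apply/measurable_funN/measurable_funM; first exact: measurable_cst.
by apply: measurable_in_Vpos; lia.
Qed.

Lemma Rintegral_incr_weight k C : (k < n)%N -> F k C ->
  \int[P]_w (incr k.+1 w * weight k C w) = 0.
Proof.
move=> kn FC; have kn' := ltnW kn; have hk : (1 <= k.+1 <= n)%N by lia.
apply: (Rintegral_mulr_subr_eq0 (F_sub kn') _ _ _ (measurable_in_weight kn FC)
  (weight_bound k C)).
- exact: Rintegrable_M kn.
- exact: Rintegrable_M kn'.
- exact: M_martingale hk.
Qed.

Lemma Rintegral_incr_sqr_weight k C : (k < n)%N -> F k C ->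
  \int[P]_w ((incr k.+1 w ^+ 2 - V k.+1 w) * weight k C w) = 0.
Proof.
move=> kn FC; have hk : (1 <= k.+1 <= n)%N by lia.
apply: (Rintegral_mulr_subr_eq0 (F_sub (ltnW kn)) _ _ _
  (measurable_in_weight kn FC) (weight_bound k C)).
- exact: Rintegrable_incr_sqr hk.
- exact: Rintegrable_V hk.
- by move=> A FA; case: (hV hk) => _ _ ->.
Qed.

(* Pointwise, 1_C W_(k+1) <= 1_C W_k + l * dM * weight + l^2/2 ((dM)^2 - V) * weight
   by exp_increment_le, and both correction terms integrate to 0. *)
Lemma Rintegral_indic_expW_succ_le k (C : set T) : (k < n)%N -> F k C ->
  \int[P]_w (\1_C w * expW k.+1 w) <= \int[P]_w (\1_C w * expW k w).
Proof.
move=> kn FC; have kn' := ltnW kn; have mC : measurable C := F_meas kn' FC.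
have mW : measurable_fun setT (weight k C).
  exact: measurable_in_fun (F_sub kn') (measurable_in_weight kn FC).
have hW w : `|weight k C w| <= expR (k%:R / 2).
  by have /andP[W0 W1] := weight_bound k C w; rewrite ger0_norm.
have idM : Rintegrable P (fun w => incr k.+1 w * weight k C w).
  by apply: Rintegrable_mulr_bounded mW hW; apply: RintegrableB;
     apply: Rintegrable_M; lia.
have idV : Rintegrable P (fun w => (incr k.+1 w ^+ 2 - V k.+1 w) * weight k C w).
  apply: Rintegrable_mulr_bounded mW hW.
  by apply: RintegrableB; [apply: Rintegrable_incr_sqr | apply: Rintegrable_V]; lia.
have iW0 := Rintegrable_indic_expW kn' mC.
apply: (@le_trans _ _ (\int[P]_w (\1_C w * expW k w
    + lam * (incr k.+1 w * weight k C w)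
    + lam ^+ 2 / 2 * ((incr k.+1 w ^+ 2 - V k.+1 w) * weight k C w)))).
  apply: le_Rintegral => //.
  - exact: Rintegrable_indic_expW.
  - by apply: RintegrableD; [apply: RintegrableD|]; rewrite //; exact: RintegrableZl.
  move=> w _; rewrite expWS (mulrA (\1_C w)) (mulrA (\1_C w)) /weight.
  by apply: exp_increment_le; rewrite mulr_ge0 ?indic_ge0 ?expW_ge0.
rewrite RintegralD //; last exact: RintegrableZl.
  rewrite RintegralD //; last exact: RintegrableZl.
  by rewrite !RintegralZl // Rintegral_incr_weight // Rintegral_incr_sqr_weight //
    !mulr0 !addr0.
by apply: RintegrableD => //; exact: RintegrableZl.
Qed.

Definition event t w : bool :=
  (x <= M t w) && (bracket t w <= alpha * M t w + beta).

Fixpoint running k w : bool :=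
  if k is k'.+1 then running k' w && ~~ event k w else true.

Fixpoint stoppedW k w : R :=
  if k is k'.+1 then (if running k' w then expW k w else stoppedW k' w)
  else expW 0 w.

Lemma F_event t : (t <= n)%N -> F t [set w | event t w].
Proof.
move=> tn; have htt : (t <= t <= n)%N by rewrite leqnn.
have -> : [set w | event t w] = [set w | x <= M t w]
          `&` [set w | bracket t w <= alpha * M t w + beta].
  by apply/seteqP; split => w /=; [move/andP | move=> [h1 h2]; apply/andP].
rewrite -(g_sigma_measurableE (F_sigma tn)); apply: measurableI.
  exact: measurable_set_ler (measurable_cst _) (measurable_in_M htt).
apply: measurable_set_ler (measurable_in_bracket htt) _.
exact: measurable_funD (measurable_funM (measurable_cst _) (measurable_in_M htt))
  (measurable_cst _).
Qed.

Lemma F_running k : (k <= n)%N -> F k [set w | running k w].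
Proof.
elim: k => [|k IH] kn.
  rewrite -(g_sigma_measurableE (F_sigma kn)) (_ : [set w | _] = setT) //.
  by apply/seteqP; split.
have -> : [set w | running k.+1 w]
          = [set w | running k w] `&` ~` [set w | event k.+1 w].
  apply/seteqP; split => w /=; first by move=> /andP[-> /negP].
  by move=> [-> /negP ->].
rewrite -(g_sigma_measurableE (F_sigma kn)); apply: measurableI.
  rewrite g_sigma_measurableE; last exact: F_sigma.
  by apply: (hF.2 k k.+1) => //; exact: IH (ltnW kn).
by apply: measurableC; rewrite g_sigma_measurableE; [exact: F_event | exact: F_sigma].
Qed.

Lemma stoppedW_running k w : running k w -> stoppedW k w = expW k w.
Proof. by case: k => //= k /andP[-> _]. Qed.

Lemma stoppedWS k w : stoppedW k.+1 w
  = stoppedW k w + \1_[set w | running k w] w * (expW k.+1 w - expW k w).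
Proof.
rewrite /= indicE; case: (boolP (running k w)) => h.
  by rewrite mem_set // stoppedW_running // mul1r addrC subrK.
by rewrite memNset ?mul0r ?addr0 //; apply/negP.
Qed.

Lemma stoppedW_bound k w : 0 <= stoppedW k w <= expR (k%:R / 2).
Proof.
elim: k => [|k IH] /=; first by rewrite expW_ge0 expW_le.
case: (running k w); first by rewrite expW_ge0 expW_le.
case/andP: IH => -> h /=; apply: le_trans h _.
by rewrite ler_expR ler_pM2r ?ler_nat.
Qed.

Lemma measurable_stoppedW k : (k <= n)%N -> measurable_fun setT (stoppedW k).
Proof.
elim: k => [|k IH] kn.
  by apply: (measurable_in_fun (F_sub kn)); exact: measurable_in_expW.
have kn' := ltnW kn.
rewrite (_ : stoppedW k.+1 = fun w => stoppedW k w
  + \1_[set w | running k w] w * (expW k.+1 w - expW k w)); last first.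
  by apply/funext => w; rewrite stoppedWS.
apply: measurable_funD; first exact: IH.
apply: measurable_funM; first exact/measurable_indic/F_meas/F_running.
by apply: measurable_funB; apply: (measurable_in_fun (F_sub kn));
  apply: measurable_in_expW; lia.
Qed.

Lemma Rintegrable_stoppedW k : (k <= n)%N -> Rintegrable P (stoppedW k).
Proof.
move=> kn; apply: (Rintegrable_bounded P (B := expR (k%:R / 2))).
  exact: measurable_stoppedW.
by move=> w; have /andP[S0 S1] := stoppedW_bound k w; rewrite ger0_norm.
Qed.

Lemma Rintegral_stoppedW_le1 k : (k <= n)%N -> \int[P]_w stoppedW k w <= 1.
Proof.
elim: k => [|k IH] kn.
  under eq_Rintegral do rewrite /= expW0.
  rewrite Rintegral_cst // mul1r.
  by have h : fine (P [set: T]) <= 1 by rewrite probability_setT.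
have kn' := ltnW kn; have mR := F_meas kn' (F_running kn').
under eq_Rintegral do rewrite stoppedWS mulrBr.
rewrite RintegralD //; last 2 first.
- exact: Rintegrable_stoppedW.
- by apply: RintegrableB; apply: Rintegrable_indic_expW.
rewrite RintegralB //; try exact: Rintegrable_indic_expW.
have := Rintegral_indic_expW_succ_le kn (F_running kn'); have := IH kn'; lra.
Qed.

Lemma lam_mul : lam * (alpha * x + beta) = x.
Proof.
have s0 : 0 < alpha * x + beta := ltr_wpDl (mulr_ge0 alpha_ge0 (ltW x_gt0)) beta_gt0.
by rewrite /lam divfK // gt_eqF.
Qed.

Lemma rate_le_expW t w : event t w -> expR rate <= expW t w.
Proof. by case/andP => hx hb; rewrite ler_expR; exact: exponent_ge_rate lam_mul hx hb. Qed.

Lemma event_not_running k t w : (1 <= t <= k)%N -> event t w -> ~~ running k w.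
Proof.
elim: k => [|k IH] ht e; first by lia.
rewrite /= negb_and; have [tk|tk] := eqVneq t k.+1; first by rewrite -tk e orbT.
by rewrite IH //; lia.
Qed.

Lemma rate_le_stoppedW k w : ~~ running k w -> expR rate <= stoppedW k w.
Proof.
elim: k => [|k IH] //=; rewrite negb_and negbK.
by case: (boolP (running k w)) => hr /= h; [exact: rate_le_expW | exact: IH].
Qed.

Lemma V_lt0_null i : (1 <= i <= n)%N -> P [set w | V i w < 0] = 0%E.
Proof.
move=> hi; have hi1 : (i.-1 <= n)%N by lia.
case: (hV hi) => mV iV hVA.
apply: (measure_lt0_eq0 (F_sub hi1) (measurable_wrt_in mV) iV) => A FA.
by rewrite hVA //; apply: integral_ge0 => w _; rewrite lee_fin sqr_ge0.
Qed.

Lemma bracket_cond_var t w : (t <= n)%N ->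
  (forall i, (1 <= i <= n)%N -> 0 <= V i w) ->
  bracket t w = cond_var V t w + quad_var M t w.
Proof.
move=> tn V0; rewrite /bracket /cond_var /quad_var addrC -big_split /=.
apply: eq_big_nat => i hi; congr (_ + _); apply/max_idPl; apply: V0; lia.
Qed.

Lemma measurable_tail_event : measurable [set w | exists t, (1 <= t <= n)%N /\
  x <= M t w /\ cond_var V t w + quad_var M t w <= alpha * M t w + beta].
Proof.
rewrite (_ : [set w | _] = \bigcup_(t in [set t | (1 <= t <= n)%N])
  ([set w | x <= M t w] `&`
   [set w | cond_var V t w + quad_var M t w <= alpha * M t w + beta])).
  apply: bigcup_measurable => t /= ht; have tn : (t <= n)%N by lia.
  apply: measurableI; first exact: measurable_set_ler (measurable_cst _) (measurable_M tn).
  apply: measurable_set_ler; last first.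
    exact: measurable_funD (measurable_funM (measurable_cst _) (measurable_M tn))
      (measurable_cst _).
  apply: measurable_funD; apply: measurable_fun_sum_nat => i hi.
    have hi' : (1 <= i <= n)%N by lia.
    have hi1 : (i.-1 <= n)%N by lia.
    by apply: (measurable_in_fun (F_sub hi1)); apply: (measurable_in_V hi'); lia.
  by apply/measurable_funX/measurable_funB; apply: measurable_M; lia.
apply/seteqP; split => w /=; first by case=> t [ht hw]; exists t.
by case=> t ht hw; exists t.
Qed.

Lemma negligible_V_lt0 :
  P.-negligible (\bigcup_i [set w | (1 <= i <= n)%N /\ V i w < 0]).
Proof.
apply: negligible_bigcup => i; have [hi|hi] := boolP (1 <= i <= n)%N.
  apply: (negligibleS (A := [set w | V i w < 0])); first by move=> w [].
  apply/negligibleP; last exact: V_lt0_null.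
  have hi1 : (i.-1 <= n)%N by lia.
  apply: (F_meas hi1); apply: (measurable_in_lt _ (F_sigma hi1)).
  by apply: (measurable_in_V hi); lia.
by apply: (negligibleS (A := set0)) (negligible_set0 _) => w [] /negP.
Qed.

Lemma tail_event_le : (P [set w | exists t, (1 <= t <= n)%N /\
  (x <= M t w)%R /\ (cond_var V t w + quad_var M t w <= alpha * M t w + beta)%R]
  <= (expR (- rate))%:E)%E.
Proof.
set E := [set w | _]; set S := [set w | expR rate <= stoppedW n w].
pose N := \bigcup_i [set w | (1 <= i <= n)%N /\ V i w < 0].
have ES : E `<=` S `|` N.
  move=> w [t [ht [hx hq]]].
  have [[i [hi Vi]]|V0] := pselect (exists i, (1 <= i <= n)%N /\ V i w < 0).
    by right; exists i.
  left; apply/rate_le_stoppedW/(event_not_running ht).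
  rewrite /event hx bracket_cond_var //; first lia.
  by move=> i hi; rewrite leNgt; apply/negP => Vi; apply: V0; exists i.
have [B [mB PB0 NB]] := negligible_V_lt0.
have mS : measurable S := measurable_set_ler (measurable_cst _) (measurable_stoppedW (leqnn n)).
apply: (@le_trans _ _ (P (S `|` B))).
  apply: le_measure; rewrite ?inE; [exact: measurable_tail_event | exact: measurableU |].
  by apply: subset_trans ES _; apply: setUS.
apply: le_trans (measureU2 P mS mB) _.
(* measureU2 views P as a content, PB0 as a probability. *)
have PB0' : (P : {content set T -> \bar R}) B = 0%E := PB0.
rewrite PB0' adde0.
apply: le_trans (Rintegral_markov (expR_gt0 _) (measurable_stoppedW (leqnn n))
  (Rintegrable_stoppedW (leqnn n)) (fun w => (andP (stoppedW_bound n w)).1)) _.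
rewrite lee_fin -expRN -[X in _ <= X]mulr1 ler_wpM2l ?expR_ge0 //.
exact: Rintegral_stoppedW_le1.
Qed.

End exponential_supermartingale.

Unset Implicit Arguments.

Theorem proposition1 (d : measure_display) (T : measurableType d)
  (R : realType) (P : probability T R) (n : nat)
  (F : nat -> set (set T)) (M : nat -> T -> R) (V : nat -> T -> R)
  (x alpha beta : R) :
  filtration n F ->
  sq_int_martingale P n F M ->
  (forall w, M 0%N w = 0) ->
  (forall i, (1 <= i <= n)%N ->
     cond_exp_version P (F i.-1) (fun w => (M i w - M i.-1 w) ^+ 2) (V i)) ->
  0 < x -> 0 < beta -> 0 <= alpha ->
  (P [set w | exists t, (1 <= t <= n)%N /\
        (x <= M t w)%R /\
        (cond_var V t w + quad_var M t w <= alpha * M t w + beta)%R]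
   <= (expR (- (if alpha == 0 then x ^+ 2 / (8 * beta)
               else Num.min (x ^+ 2 / (8 * beta)) (x / (6 * alpha)))))%:E)%E.
Proof.
move=> hF hM hM0 hV x_gt0 beta_gt0 alpha_ge0.
apply: le_trans (tail_event_le hF hM hM0 hV x_gt0 beta_gt0 alpha_ge0) _.
by rewrite lee_fin ler_expR lerN2; exact: min_rate_le.
Qed.
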